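(* Let $(X,\sigma)$ be a complete metric-like space, and let $\varphi:(0,\infty)\to(1,\infty)$ be a function such that for every sequence $\{t_n\}\subset(0,\infty)$, $\varphi(t_n)\to 1$ from above implies $t_n\to0$. Suppose $S,T:X\to X$ are onto mappings such that $\sigma(Tx,Sy)\geq \varphi(\sigma(x,y))\,\sigma(x,y)$ for all $x,y\in X$ with $\sigma(x,y)>0$. Then $T$ and $S$ have a common fixed point.
   Context: A metric-like on $X$ is a map $\sigma:X\times X\to[0,\infty)$ such that for all $x,y,z\in X$: $\sigma(x,y)=0\Rightarrow x=y$; $\sigma(x,y)=\sigma(y,x)$; $\sigma(x,z)\le\sigma(x,y)+\sigma(y,z)$. A sequence $\{x_n\}$ converges to $x$ if $\lim_n\sigma(x_n,x)=\sigma(x,x)$; it is Cauchy if $\lim_{n,m}\sigma(x_n,x_m)$ exists and is finite; $(X,\sigma)$ is complete if every Cauchy sequence $\{x_n\}$ converges to some $x$ with $\lim_{n,m}\sigma(x_n,x_m)=\sigma(x,x)=\lim_n\sigma(x_n,x)$. *)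

From Stdlib Require Import Reals.
Open Scope R_scope.

Definition metric_like {X : Type} (sigma : X -> X -> R) : Prop :=
  (forall x y, 0 <= sigma x y) /\
  (forall x y, sigma x y = 0 -> x = y) /\
  (forall x y, sigma x y = sigma y x) /\
  (forall x y z, sigma x z <= sigma x y + sigma y z).

Definition ml_converges {X : Type} (sigma : X -> X -> R) (u : nat -> X) (x : X) : Prop :=
  Un_cv (fun n => sigma (u n) x) (sigma x x).

Definition double_lim (a : nat -> nat -> R) (L : R) : Prop :=
  forall eps, eps > 0 -> exists N : nat, forall n m, (n >= N)%nat -> (m >= N)%nat ->
    Rabs (a n m - L) < eps.

Definition ml_cauchy {X : Type} (sigma : X -> X -> R) (u : nat -> X) : Prop :=
  exists L : R, double_lim (fun n m => sigma (u n) (u m)) L.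

Definition ml_complete {X : Type} (sigma : X -> X -> R) : Prop :=
  forall u : nat -> X, ml_cauchy sigma u ->
    exists x : X,
      double_lim (fun n m => sigma (u n) (u m)) (sigma x x) /\
      ml_converges sigma u x.

From Stdlib Require Import Reals.
From Stdlib Require Import Lra Lia ClassicalEpsilon Classical.
Open Scope R_scope.

(* Choosing right inverses [f] of [T] and [g] of [S] turns the expansive condition
   into a contractive one: [sigma (f u) (g v)] is dominated by [sigma u v] through
   [phi]. The hypothesis on [phi] says exactly that [phi] is bounded away from 1 on
   every [[eps, +oo)], so domination gains a fixed amount on any pair at distance at
   least [eps]. Along the orbit [x0, f x0, g (f x0), ...] this forces consecutive
   distances, and then all mutual distances, to 0; the limit provided by completeness
   is a common fixed point of [f] and [g], hence of [T] and [S]. *)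

Section PhiGap.

Variable phi : R -> R.
Hypothesis phi_gt1 : forall t, 0 < t -> 1 < phi t.
Hypothesis phi_cv1 : forall t : nat -> R, (forall n, 0 < t n) ->
  Un_cv (fun n => phi (t n)) 1 -> Un_cv t 0.

Lemma phi_bounded_away_from_1 (eps : R) : 0 < eps ->
  exists delta, 0 < delta /\ forall t, eps <= t -> 1 + delta <= phi t.
Proof.
  intro eps_pos. apply NNPP; intro no_delta.
  assert (close_to_1 : forall n : nat, exists t, eps <= t /\ phi t < 1 + / INR (S n)).
  { intro n. apply NNPP; intro no_t. apply no_delta.
    exists (/ INR (S n)); split.
    - apply Rinv_0_lt_compat, lt_0_INR; lia.
    - intros t t_ge. apply Rnot_lt_le; intro t_lt. apply no_t; eauto. }
  destruct (choice _ close_to_1) as [t t_close].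
  assert (t_pos : forall n, 0 < t n) by (intro n; specialize (t_close n); lra).
  assert (phi_t_cv1 : Un_cv (fun n => phi (t n)) 1).
  { intros e e_pos. destruct (archimed_cor1 e e_pos) as [N [invN_lt N_pos]].
    exists N; intros n n_ge. unfold R_dist.
    assert (inv_le : / INR (S n) <= / INR N).
    { apply Rinv_le_contravar; [apply lt_0_INR; lia | apply le_INR; lia]. }
    specialize (t_close n). specialize (phi_gt1 _ (t_pos n)).
    rewrite Rabs_right; lra. }
  destruct (phi_cv1 t t_pos phi_t_cv1 eps eps_pos) as [N t_small].
  specialize (t_small N (le_n N)). specialize (t_close N). specialize (t_pos N).
  unfold R_dist in t_small. rewrite Rminus_0_r, Rabs_right in t_small; lra.
Qed.

Lemma phi_gap (eps : R) : 0 < eps ->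
  exists c, 0 < c /\ forall t, eps <= t -> t + c <= phi t * t.
Proof.
  intro eps_pos. destruct (phi_bounded_away_from_1 eps eps_pos) as [delta [delta_pos away]].
  exists (delta * eps); split; [nra|].
  intros t t_ge. specialize (away t t_ge). nra.
Qed.

End PhiGap.

Lemma double_lim_unique (a : nat -> nat -> R) (L1 L2 : R) :
  double_lim a L1 -> double_lim a L2 -> L1 = L2.
Proof.
  intros lim1 lim2. apply NNPP; intro neq.
  assert (gap_pos : 0 < Rabs (L1 - L2) / 2)
    by (apply Rdiv_lt_0_compat; [apply Rabs_pos_lt, Rminus_eq_contra|]; lra).
  destruct (lim1 _ gap_pos) as [N1 close1]. destruct (lim2 _ gap_pos) as [N2 close2].
  specialize (close1 (max N1 N2) (max N1 N2) ltac:(lia) ltac:(lia)).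
  specialize (close2 (max N1 N2) (max N1 N2) ltac:(lia) ltac:(lia)).
  assert (triangle : Rabs (L1 - L2) <= Rabs (a (max N1 N2) (max N1 N2) - L1)
                                        + Rabs (a (max N1 N2) (max N1 N2) - L2)).
  { rewrite <- (Rabs_Ropp (_ - L1)).
    replace (L1 - L2) with (- (a (max N1 N2) (max N1 N2) - L1) + (a (max N1 N2) (max N1 N2) - L2))
      by ring.
    apply Rabs_triang. }
  lra.
Qed.

Lemma cv0_le_eq0 (e : nat -> R) (k : nat -> nat) (c : R) :
  Un_cv e 0 -> 0 <= c -> (forall n, (n <= k n)%nat) ->
  (forall n, c <= e (k n) + e (S (k n))) -> c = 0.
Proof.
  intros e_cv0 c_ge0 k_ge c_le. apply Rle_antisym; [|exact c_ge0].
  apply Rnot_lt_le; intro c_pos.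
  destruct (e_cv0 (c / 2)) as [N small]; [lra|].
  pose proof (small (k N) (k_ge N)) as small1.
  pose proof (small (S (k N)) ltac:(specialize (k_ge N); lia)) as small2.
  specialize (c_le N). unfold R_dist in small1, small2. rewrite Rminus_0_r in small1, small2.
  apply Rabs_def2 in small1. apply Rabs_def2 in small2. lra.
Qed.

Lemma even_neq_even_succ (n : nat) : Nat.even n <> Nat.even (S n).
Proof. rewrite Nat.even_succ, <- Nat.negb_even. destruct (Nat.even n); discriminate. Qed.

Definition phi_dominated (phi : R -> R) (s r : R) : Prop := 0 < s -> phi s * s <= r.

Section AlternatingOrbit.

Variables (X : Type) (sigma : X -> X -> R).
Hypothesis sigma_ge0 : forall x y, 0 <= sigma x y.
Hypothesis sigma_eq0 : forall x y, sigma x y = 0 -> x = y.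
Hypothesis sigma_sym : forall x y, sigma x y = sigma y x.
Hypothesis sigma_triangle : forall x y z, sigma x z <= sigma x y + sigma y z.

Variable phi : R -> R.
Hypothesis phi_gt1 : forall t, 0 < t -> 1 < phi t.
Hypothesis phi_uniform_gap : forall eps, 0 < eps ->
  exists c, 0 < c /\ forall t, eps <= t -> t + c <= phi t * t.

Variables (f g : X -> X) (x0 : X).
Hypothesis fg_dominated : forall u v, phi_dominated phi (sigma (f u) (g v)) (sigma u v).

Lemma sigma_fg_le (u v : X) : sigma (f u) (g v) <= sigma u v.
Proof.
  destruct (Rle_lt_or_eq_dec 0 _ (sigma_ge0 (f u) (g v))) as [pos | <-].
  - specialize (fg_dominated u v pos). specialize (phi_gt1 _ pos). nra.
  - apply sigma_ge0.
Qed.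

Fixpoint orbit (n : nat) : X :=
  match n with
  | O => x0
  | S m => (if Nat.even m then f else g) (orbit m)
  end.

Lemma orbit_succ (n : nat) : orbit (S n) = (if Nat.even n then f else g) (orbit n).
Proof. reflexivity. Qed.

Lemma orbit_step_dominated (i j : nat) : Nat.even i <> Nat.even j ->
  phi_dominated phi (sigma (orbit (S i)) (orbit (S j))) (sigma (orbit i) (orbit j)).
Proof.
  simpl. destruct (Nat.even i), (Nat.even j); intro parity; try congruence.
  - apply fg_dominated.
  - rewrite (sigma_sym (g _)), (sigma_sym (orbit i)). apply fg_dominated.
Qed.

Lemma orbit_step_le (i j : nat) : Nat.even i <> Nat.even j ->
  sigma (orbit (S i)) (orbit (S j)) <= sigma (orbit i) (orbit j).
Proof.
  simpl. destruct (Nat.even i), (Nat.even j); intro parity; try congruence.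
  - apply sigma_fg_le.
  - rewrite (sigma_sym (g _)), (sigma_sym (orbit i)). apply sigma_fg_le.
Qed.

Let step (n : nat) : R := sigma (orbit n) (orbit (S n)).

(* While the steps stay above [eps], each one is at least [c] below the previous
   one, which cannot go on forever. *)
Lemma step_cv0 : Un_cv step 0.
Proof.
  intros eps eps_pos.
  assert (step_decr : Un_decreasing step)
    by (intro n; apply orbit_step_le, even_neq_even_succ).
  destruct (classic (exists N, step N < eps)) as [[N small] | never].
  - exists N; intros n n_ge. unfold R_dist.
    rewrite Rminus_0_r, Rabs_right by (apply Rle_ge, sigma_ge0).
    exact (Rle_lt_trans _ _ _ (decreasing_prop step N n step_decr n_ge) small).
  - exfalso. destruct (phi_uniform_gap eps eps_pos) as [c [c_pos gap]].
    assert (large : forall n, eps <= step n)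
      by (intro n; apply Rnot_lt_le; intro; apply never; eauto).
    assert (drop : forall n, step (S n) + c <= step n).
    { intro n. pose proof (orbit_step_dominated n (S n) (even_neq_even_succ n)) as dom.
      specialize (gap _ (large (S n))).
      specialize (dom (Rlt_le_trans _ _ _ eps_pos (large (S n)))). unfold step in *. lra. }
    assert (linear : forall n, step n + INR n * c <= step 0).
    { induction n as [|n IH]; [simpl; lra|]. rewrite S_INR. specialize (drop n). lra. }
    destruct (INR_archimed c (step 0) c_pos) as [n big].
    specialize (linear n). specialize (sigma_ge0 (orbit n) (orbit (S n))). unfold step in *. lra.
Qed.

(* If [sigma (x_(i+1), x_(j+1)) >= eps], domination gains a fixed [c] over
   [sigma (x_i, x_j) <= step i + sigma (x_(i+1), x_(j+1)) + step j]. *)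
Lemma orbit_cross_small (eps : R) : 0 < eps -> exists N, forall i j,
  (N <= i)%nat -> (N <= j)%nat -> Nat.even i <> Nat.even j ->
  sigma (orbit (S i)) (orbit (S j)) < eps.
Proof.
  intro eps_pos. destruct (phi_uniform_gap eps eps_pos) as [c [c_pos gap]].
  destruct (step_cv0 (c / 2)) as [N small]; [lra|].
  assert (step_small : forall n, (n >= N)%nat -> step n < c / 2).
  { intros n n_ge. specialize (small n n_ge). unfold R_dist in small.
    rewrite Rminus_0_r in small. apply Rabs_def2 in small. lra. }
  exists N; intros i j i_ge j_ge parity. apply Rnot_le_lt; intro big.
  pose proof (orbit_step_dominated i j parity (Rlt_le_trans _ _ _ eps_pos big)) as dom.
  specialize (gap _ big).
  pose proof (sigma_triangle (orbit i) (orbit (S i)) (orbit j)).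
  pose proof (sigma_triangle (orbit (S i)) (orbit (S j)) (orbit j)).
  pose proof (step_small i i_ge). pose proof (step_small j j_ge).
  unfold step in *. rewrite (sigma_sym (orbit (S j))) in *. lra.
Qed.

Lemma orbit_double_lim0 : double_lim (fun n m => sigma (orbit n) (orbit m)) 0.
Proof.
  intros eps eps_pos.
  destruct (orbit_cross_small (eps / 2)) as [N1 cross]; [lra|].
  destruct (step_cv0 (eps / 2)) as [N2 small]; [lra|].
  exists (S (max N1 N2)). intros [|n] [|m] n_ge m_ge; try lia.
  rewrite Rminus_0_r, Rabs_right by (apply Rle_ge, sigma_ge0).
  destruct (Bool.bool_dec (Nat.even n) (Nat.even m)) as [same | diff].
  - assert (parity : Nat.even n <> Nat.even (S m))
      by (rewrite same; apply even_neq_even_succ).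
    specialize (cross n (S m) ltac:(lia) ltac:(lia) parity).
    specialize (small (S m) ltac:(lia)). unfold R_dist in small.
    rewrite Rminus_0_r in small. apply Rabs_def2 in small.
    pose proof (sigma_triangle (orbit (S n)) (orbit (S (S m))) (orbit (S m))).
    unfold step in small. rewrite sigma_sym in small. lra.
  - specialize (cross n m ltac:(lia) ltac:(lia) diff). lra.
Qed.

Lemma orbit_limit_common_fixed (z : X) :
  Un_cv (fun n => sigma (orbit n) z) 0 -> f z = z /\ g z = z.
Proof.
  intro orbit_cv. split; apply sigma_eq0.
  - apply (cv0_le_eq0 _ (fun n => 2 * n + 1)%nat _ orbit_cv (sigma_ge0 _ _)); [lia|].
    intro n. pose proof (sigma_fg_le z (orbit (2 * n + 1))) as contract.
    pose proof (sigma_triangle (f z) (orbit (S (2 * n + 1))) z).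
    rewrite orbit_succ, Nat.even_odd in *. rewrite (sigma_sym z) in contract. lra.
  - apply (cv0_le_eq0 _ (fun n => 2 * n)%nat _ orbit_cv (sigma_ge0 _ _)); [lia|].
    intro n. pose proof (sigma_fg_le (orbit (2 * n)) z) as contract.
    pose proof (sigma_triangle (g z) (orbit (S (2 * n))) z).
    rewrite orbit_succ, Nat.even_even in *. rewrite (sigma_sym (g z) (f _)) in *. lra.
Qed.

Theorem dominated_pair_common_fixed_point :
  ml_complete sigma -> exists z, f z = z /\ g z = z.
Proof.
  intro complete.
  destruct (complete orbit (ex_intro _ 0 orbit_double_lim0)) as [z [lim_z orbit_cv]].
  exists z. apply orbit_limit_common_fixed.
  unfold ml_converges in orbit_cv.
  rewrite <- (double_lim_unique _ _ _ orbit_double_lim0 lim_z) in orbit_cv.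
  exact orbit_cv.
Qed.

End AlternatingOrbit.

Theorem corollary2p6 (X : Type) (x0 : X) (sigma : X -> X -> R)
  (Hml : metric_like sigma) (Hcomp : ml_complete sigma)
  (phi : R -> R)
  (Hphi_range : forall t, 0 < t -> 1 < phi t)
  (Hphi : forall t : nat -> R, (forall n, 0 < t n) ->
            Un_cv (fun n => phi (t n)) 1 -> Un_cv t 0)
  (S T : X -> X)
  (HS : forall y, exists x, S x = y)
  (HT : forall y, exists x, T x = y)
  (Hcontr : forall x y, 0 < sigma x y ->
            phi (sigma x y) * sigma x y <= sigma (T x) (S y)) :
  exists x, T x = x /\ S x = x.
Proof.
  destruct Hml as [sigma_ge0 [sigma_eq0 [sigma_sym sigma_triangle]]].
  destruct (choice (fun y x => T x = y) HT) as [f Tf].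
  destruct (choice (fun y x => S x = y) HS) as [g Sg].
  assert (fg_dominated : forall u v, phi_dominated phi (sigma (f u) (g v)) (sigma u v)).
  { intros u v pos. pose proof (Hcontr _ _ pos) as contr. rewrite Tf, Sg in contr. exact contr. }
  destruct (dominated_pair_common_fixed_point X sigma sigma_ge0 sigma_eq0 sigma_sym
              sigma_triangle phi Hphi_range (phi_gap phi Hphi_range Hphi) f g x0
              fg_dominated Hcomp) as [z [fz gz]].
  exists z. split.
  - rewrite <- fz at 1. apply Tf.
  - rewrite <- gz at 1. apply Sg.
Qed.
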